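(* Let $D=(E,\mathcal{F})$ be a delta-matroid and let $e_1,e_2\in E$ with $e_1\neq e_2$. Then the primal type of $e_2$ in $D-e_1$ is the same as its primal type in $D$.
   Context: A delta-matroid is a pair $D=(E,\mathcal{F})$ with $E$ finite, $\mathcal{F}$ a nonempty collection of subsets of $E$ (feasible sets), such that for all $X,Y\in\mathcal{F}$ and $u\in X\Delta Y$ there is $v\in X\Delta Y$ (possibly $v=u$) with $X\Delta\{u,v\}\in\mathcal{F}$. The twist by $A\subseteq E$ is $D*A=(E,\{A\Delta X:X\in\mathcal{F}\})$. An element $e$ is a coloop if it lies in every feasible set. The deletion $D-e$ is $(E-e,\{F\in\mathcal{F}: e\notin F\})$ if $e$ is not a coloop, and $(E-e,\{F-e: F\in\mathcal{F}\})$ if $e$ is a coloop. Let $\mathcal{F}_{\min}(D)$ be the set of minimum-cardinality feasible sets. An element $e$ is a ribbon loop if $e$ lies in no member of $\mathcal{F}_{\min}(D)$; a ribbon loop $e$ is non-orientable if it is still a ribbon loop in $D*e$, and orientable otherwise. The primal type of $e$ in $D$ is $p$ if $e$ is not a ribbon loop, $u$ if it is an orientable ribbon loop, and $t$ if it is a non-orientable ribbon loop. *)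

From HB Require Import structures.
From mathcomp Require Import all_boot.
Set Implicit Arguments. Unset Strict Implicit. Unset Printing Implicit Defensive.

Section DeltaMatroid.
Variable T : finType.

Definition symdiff (A B : {set T}) : {set T} := (A :\: B) :|: (B :\: A).

Definition is_delta_matroid (E : {set T}) (F : {set {set T}}) : Prop :=
  F != set0 /\
  (forall X, X \in F -> X \subset E) /\
  (forall X Y u, X \in F -> Y \in F -> u \in symdiff X Y ->
     exists2 v, v \in symdiff X Y & symdiff X [set u; v] \in F).

Definition twist (F : {set {set T}}) (A : {set T}) : {set {set T}} :=
  [set symdiff A X | X in F].

Definition is_coloop (F : {set {set T}}) (e : T) : bool :=
  [forall X in F, e \in X].

Definition del_ground (E : {set T}) (e : T) : {set T} := E :\ e.
Definition del_feas (F : {set {set T}}) (e : T) : {set {set T}} :=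
  if is_coloop F e then [set X :\ e | X in F]
  else [set X in F | e \notin X].

Definition Fmin (F : {set {set T}}) : {set {set T}} :=
  [set X in F | [forall Y in F, #|X| <= #|Y|]].

Definition ribbon_loop (F : {set {set T}}) (e : T) : bool :=
  [forall X in Fmin F, e \notin X].

End DeltaMatroid.

Inductive ptype := Tp | Tu | Tt.

Definition primal_type (T : finType) (F : {set {set T}}) (e : T) : ptype :=
  if ~~ ribbon_loop F e then Tp
  else if ribbon_loop (twist F [set e]) e then Tt else Tu.

From mathcomp Require Import all_boot.
Set Implicit Arguments. Unset Strict Implicit. Unset Printing Implicit Defensive.

(* Only the minimum feasible sets matter.  If e is a coloop, D - e just
   removes e from every feasible set, which preserves cardinality order.
   Otherwise the exchange axiom turns a minimum feasible set X containing e
   into a minimum feasible set (X - e) + v avoiding e; so the minimum feasible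
   sets of D - e are those of D avoiding e, and every f <> e lying in some
   minimum feasible set of D still lies in one of D - e.  Hence deleting
   e1 preserves whether e2 is a ribbon loop.  Finally twisting by {e2}
   commutes with deleting e1 and preserves the exchange axiom, so the same
   holds in D * e2. *)

Section DeltaMatroidDeletion.
Variable T : finType.
Implicit Types (G : {set {set T}}) (A X Y Z : {set T}) (e f : T).

Definition exchange_axiom G : Prop :=
  forall X Y u, X \in G -> Y \in G -> u \in symdiff X Y ->
    exists2 v, v \in symdiff X Y & symdiff X [set u; v] \in G.

Lemma in_symdiff A B x : (x \in symdiff A B) = (x \in A) (+) (x \in B).
Proof. by rewrite /symdiff !inE; case: (x \in A); case: (x \in B). Qed.

Lemma symdiffA A B C : symdiff A (symdiff B C) = symdiff (symdiff A B) C.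
Proof. by apply/setP => x; rewrite !in_symdiff addbA. Qed.

Lemma FminP G X :
  reflect (X \in G /\ forall Y, Y \in G -> #|X| <= #|Y|) (X \in Fmin G).
Proof.
rewrite /Fmin inE; apply: (iffP andP) => [[XG /forall_inP //]|[XG Xmin]].
by split=> //; apply/forall_inP.
Qed.

Lemma Fmin_exists G Y : Y \in G -> exists X, X \in Fmin G.
Proof.
move=> YG; have [X XG Xmin] := arg_minnP (fun X => #|X|) YG.
by exists X; apply/FminP.
Qed.

Lemma exchange_twist G A : exchange_axiom G -> exchange_axiom (twist G A).
Proof.
move=> exG _ _ u /imsetP[X XG ->] /imsetP[Y YG ->].
have -> : symdiff (symdiff A X) (symdiff A Y) = symdiff X Y.
  by apply/setP => x; rewrite !in_symdiff addbACA addbb.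
move=> uXY; have [v vXY WG] := exG X Y u XG YG uXY.
by exists v; rewrite // -symdiffA; apply: imset_f.
Qed.

Lemma coloop_twist G A e : e \notin A -> is_coloop (twist G A) e = is_coloop G e.
Proof.
move=> eA; have eAX X : (e \in symdiff A X) = (e \in X).
  by rewrite in_symdiff (negbTE eA).
apply/forall_inP/forall_inP => [col X XG | col _ /imsetP[X XG ->]].
- by rewrite -eAX; apply: col; apply: imset_f.
- by rewrite eAX; apply: col.
Qed.

Lemma twist_del G A e : e \notin A ->
  twist (del_feas G e) A = del_feas (twist G A) e.
Proof.
move=> eA; have eAX X : (e \in symdiff A X) = (e \in X).
  by rewrite in_symdiff (negbTE eA).
rewrite /del_feas coloop_twist //; case: ifP => _.
- rewrite /twist -!imset_comp; apply: eq_imset => X /=; apply/setP => x.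
  rewrite !(in_symdiff, inE); case: (eqVneq x e) => [->|//].
  by rewrite (negbTE eA).
- apply/setP => Z; rewrite inE; apply/imsetP/andP.
  + by case=> X /setIdP[XG eX] ->; rewrite eAX imset_f.
  + case=> /imsetP[X XG ->]; rewrite eAX => eX.
    by exists X; rewrite // inE XG.
Qed.

Section Exchange.
Variable G : {set {set T}}.
Hypothesis exG : exchange_axiom G.

(* The element v supplied by the exchange axiom cannot lie in X, since
   X - {e, v} would be a smaller feasible set. *)
Lemma Fmin_swap X Y e : X \in Fmin G -> e \in X -> Y \in G -> e \notin Y ->
  exists Z, [/\ Z \in Fmin G, e \notin Z & X :\ e \subset Z].
Proof.
move=> /FminP[XG Xmin] eX YG eY.
have eXY : e \in symdiff X Y by rewrite in_symdiff eX (negbTE eY).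
have [v _ WG] := exG XG YG eXY; set W := symdiff X [set e; v] in WG.
have vX : v \notin X.
  apply: contraTN (Xmin W WG) => vX; rewrite -ltnNge; apply: proper_card.
  apply/properP; split; last by exists e; rewrite // in_symdiff !inE eqxx eX.
  apply/subsetP => x; rewrite in_symdiff !inE.
  case: (eqVneq x e) => [->|_]; first by rewrite eX.
  by case: (eqVneq x v) => [->|_]; rewrite ?vX ?addbF.
have ve : v != e by apply: contraNneq vX => ->.
have defW : W = v |: (X :\ e).
  apply/setP => x; rewrite in_symdiff !inE.
  case: (eqVneq x e) => [->|_]; first by rewrite eX eq_sym (negbTE ve).
  by case: (eqVneq x v) => [->|_]; rewrite ?(negbTE vX) //; case: (x \in X).
exists W; split; last by rewrite defW subsetUr.
- apply/FminP; split=> // Z ZG; apply: leq_trans (Xmin Z ZG).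
  by rewrite defW cardsU1 !inE (negbTE vX) andbF (cardsD1 e X) eX.
- by rewrite defW !inE eq_sym (negbTE ve) eqxx.
Qed.

Lemma Fmin_avoid Y e : Y \in G -> e \notin Y ->
  exists Z, Z \in Fmin G /\ e \notin Z.
Proof.
move=> YG eY; have [X XF] := Fmin_exists YG.
have [eX|eX] := boolP (e \in X); last by exists X.
by have [Z [ZF eZ _]] := Fmin_swap XF eX YG eY; exists Z.
Qed.

Lemma Fmin_del_noncoloop Y e : Y \in G -> e \notin Y ->
  Fmin [set X in G | e \notin X] = [set X in Fmin G | e \notin X].
Proof.
move=> YG eY; have [Z [/FminP[ZG Zmin] eZ]] := Fmin_avoid YG eY.
apply/setP => X; rewrite inE.
apply/FminP/andP => [[/setIdP[XG eX] Xmin]|[/FminP[XG Xmin] eX]].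
- split=> //; apply/FminP; split=> // W WG.
  by apply: leq_trans (Zmin W WG); apply: Xmin; rewrite inE ZG.
- by split=> [|W /setIdP[WG _]]; [rewrite inE XG | apply: Xmin].
Qed.

Lemma ribbon_loop_del_noncoloop Y e f : Y \in G -> e \notin Y -> e != f ->
  ribbon_loop [set X in G | e \notin X] f = ribbon_loop G f.
Proof.
move=> YG eY ef; rewrite /ribbon_loop (Fmin_del_noncoloop YG eY).
apply/forall_inP/forall_inP => [fmin X XF | fmin X /setIdP[XF _]]; last exact: fmin.
have [eX|eX] := boolP (e \in X); last by apply: fmin; rewrite inE XF.
have [Z [ZF eZ sXZ]] := Fmin_swap XF eX YG eY.
have ZF' : Z \in [set X in Fmin G | e \notin X] by rewrite inE ZF.
apply: contraTN (fmin Z ZF') => fX; rewrite negbK.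
by apply: (subsetP sXZ); rewrite !inE eq_sym ef.
Qed.

End Exchange.

Lemma Fmin_del_coloop G e : is_coloop G e ->
  Fmin [set X :\ e | X in G] = [set X :\ e | X in Fmin G].
Proof.
move=> /forall_inP col.
have cardD1e X : X \in G -> #|X| = #|X :\ e|.+1.
  by move=> XG; rewrite (cardsD1 e X) col.
have leD1e X Y : X \in G -> Y \in G -> (#|X :\ e| <= #|Y :\ e|) = (#|X| <= #|Y|).
  by move=> XG YG; rewrite (cardD1e X) // (cardD1e Y).
apply/setP => Z; apply/FminP/imsetP => [[/imsetP[X XG ->] Xmin]|[X XF ->]].
- exists X => //; apply/FminP; split=> // Y YG.
  by rewrite -leD1e //; apply: Xmin; apply: imset_f.
- have /FminP[XG Xmin] := XF; split; first exact: imset_f.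
  by move=> _ /imsetP[Y YG ->]; rewrite leD1e // Xmin.
Qed.

Lemma ribbon_loop_del_coloop G e f : is_coloop G e -> e != f ->
  ribbon_loop [set X :\ e | X in G] f = ribbon_loop G f.
Proof.
move=> col ef; rewrite /ribbon_loop Fmin_del_coloop //.
have fD1e X : (f \in X :\ e) = (f \in X) by rewrite !inE eq_sym ef.
apply/forall_inP/forall_inP => [fmin X XF | fmin _ /imsetP[X XF ->]].
- by rewrite -fD1e; apply: fmin; apply: imset_f.
- by rewrite fD1e; apply: fmin.
Qed.

Lemma ribbon_loop_del G e f : exchange_axiom G -> e != f ->
  ribbon_loop (del_feas G e) f = ribbon_loop G f.
Proof.
move=> exG ef; rewrite /del_feas; case: ifPn => [col|/forall_inPn[Y YG eY]].
- exact: ribbon_loop_del_coloop.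
- exact: (ribbon_loop_del_noncoloop exG YG eY ef).
Qed.

End DeltaMatroidDeletion.

Theorem lemma3 (T : finType) (E : {set T}) (F : {set {set T}}) (e1 e2 : T) :
  is_delta_matroid E F -> e1 \in E -> e2 \in E -> e1 != e2 ->
  primal_type (del_feas F e1) e2 = primal_type F e2.
Proof.
move=> [_ [_ exF]] _ _ e12.
have e1_notin_e2 : e1 \notin [set e2] by rewrite inE.
rewrite /primal_type twist_del // !ribbon_loop_del //.
exact: exchange_twist.
Qed.
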